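(* Suppose $(A,W)$ is a $T_1$ Pratt comonoid which is generated by a countably infinite family $S$ of subsets of $A$, and suppose there is a partition of $S$ into finitely many disjoint subsets $S^{(0)},\dots,S^{(k-1)}$ such that no relation $t_0\cup\dots\cup t_{n-1}\supseteq s_0\cap\dots\cap s_{m-1}$ (with all $t_j,s_i\in S$) holding in $W$, in which every $t_j$ is distinct from every $s_i$, has all but at most one of the $s_i$ belonging to the same set $S^{(l)}$. Then $W$ has at least continuum cardinality, and in fact $W$ contains a complete sublattice isomorphic to the lattice of all subsets of $\omega$.
   Context: A Pratt comonoid is a pair $(A,W)$ where $A$ is a set and $W$ is a set of subsets of $A$ such that (i) $\emptyset\in W$ and $A\in W$; (ii) whenever $C\subseteq A\times A$ is such that for every $a\in A$ both the $a$-th row $\{b\mid (a,b)\in C\}$ and the $a$-th column $\{b\mid (b,a)\in C\}$ belong to $W$ (a crossword over $W$), the diagonal $\{b\mid (b,b)\in C\}$ also belongs to $W$. $(A,W)$ is $T_1$ if for all distinct $a,b\in A$ some member of $W$ contains $a$ but not $b$. $(A,W)$ is generated by $S$ if $W$ is the least Pratt comonoid structure on $A$ containing $S$. A complete sublattice of $W$ is a subset of $W$ closed under arbitrary unions and intersections taken in the power set of $A$, not necessarily containing $\emptyset$ or $A$. *)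

From mathcomp Require Import all_boot.
From mathcomp Require Import boolp classical_sets cardinality.
Set Implicit Arguments. Unset Strict Implicit. Unset Printing Implicit Defensive.
Local Open Scope classical_set_scope.

Definition pratt_comonoid (A : Type) (W : set (set A)) : Prop :=
  W set0 /\ W setT /\
  forall C : set (A * A),
    (forall a : A, W [set b | C (a, b)] /\ W [set b | C (b, a)]) ->
    W [set b | C (b, b)].

Definition pratt_T1 (A : Type) (W : set (set A)) : Prop :=
  forall a b : A, a <> b -> exists U, W U /\ U a /\ ~ U b.

Definition pratt_generated_by (A : Type) (W S : set (set A)) : Prop :=
  pratt_comonoid W /\ S `<=` W /\
  forall W' : set (set A), pratt_comonoid W' -> S `<=` W' -> W `<=` W'.

Definition complete_sublattice (A : Type) (W L : set (set A)) : Prop :=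
  L `<=` W /\
  forall F : set (set A), F `<=` L -> F !=set0 ->
    L (\bigcup_(X in F) X) /\ L (\bigcap_(X in F) X).

Definition is_partition_of (A : Type) (k : nat) (S : set (set A))
  (P : 'I_k -> set (set A)) : Prop :=
  (forall l, P l `<=` S) /\ S `<=` \bigcup_(l in [set: 'I_k]) P l /\
  (forall l l' : 'I_k, l <> l' -> P l `&` P l' = set0).

(* Enumerate infinitely many generators a_0, a_1, ... taken from one class of
   the partition, and the remaining generators as v_0, v_1, .... For X ⊆ ω the
   staircase
     f X = ⋃_i (a_0 ∩ ... ∩ a_(k_i - 1)) ∩ (v_0 ∪ ... ∪ v_i),
   with k_i = i if i ∈ X and k_i = i + 1 otherwise, belongs to W by the
   crossword axiom as soon as ⋂_i a_i = ∅ or ⋃_i v_i = A: each row and each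
   column of the corresponding crossword is then ∅, A, or a finite union of
   finite intersections of generators. Moreover f X = K ∪ ⋃_(n ∈ X) M_n for
   pairwise disjoint blocks M_n, and the hypothesis on relations, applied to
   a_0 ∩ ... ∩ a_(n-1) ∩ v_n ⊆ a_n ∪ v_0 ∪ ... ∪ v_(n-1), gives points
   z_n ∈ M_n \ K; hence f embeds the power set of ω into W, preserving
   inclusion and nonempty unions and intersections. In the remaining case T_1
   forces a point lying in exactly the generators a_i, and such points cannot
   exist both for (a_i) and for its tail (a_(i+1)). *)

From mathcomp Require Import all_boot zify.
From mathcomp Require Import boolp classical_sets functions cardinality sequences.
Set Implicit Arguments.
Unset Strict Implicit.

Local Open Scope classical_set_scope.

Lemma subset_bigcap_lt (T : Type) (F : nat -> set T) m n : (m <= n)%N ->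
  \bigcap_(i < n) F i `<=` \bigcap_(i < m) F i.
Proof. by move=> mn x Fx i im; apply: Fx; exact: leq_trans im mn. Qed.

Lemma infinite_range (T : Type) (f : nat -> T) : injective f -> infinite_set (range f).
Proof.
move=> finj; apply/infiniteP.
by have /card_eqPle[] := @inj_card_eq _ _ setT _ (in2W finj).
Qed.

Lemma countable_infinite_bij (T : pointedType) (B : set T) :
  countable B -> infinite_set B -> exists f : nat -> T, set_bij [set: nat] B f.
Proof.
by move=> cB iB; apply/card_set_bijP; rewrite card_eq_sym; exact: eq_card_nat.
Qed.

Lemma infinite_partition_class (T : Type) (S : set T) k (P : 'I_k -> set T) :
  infinite_set S -> S `<=` \bigcup_(l in [set: 'I_k]) P l ->
  exists l, infinite_set (P l).
Proof.
move=> iS SP; apply: contrapT => /forallNP finP; apply/iS/(sub_finite_set SP).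
by apply: bigcup_finite => [|l _]; [exact: finite_finset | exact: contrapT (finP l)].
Qed.

Section PrattClosure.
Variables (A : Type) (W : set (set A)).
Hypothesis hW : pratt_comonoid W.

Lemma pratt_set0 : W set0. Proof. by case: hW. Qed.

Lemma pratt_setT : W setT. Proof. by case: hW => _ []. Qed.

Lemma pratt_crossword (C : A -> A -> Prop) :
  (forall a, W (C a) /\ W (C^~ a)) -> W [set a | C a a].
Proof. by case: hW => _ [_ Wc]; apply: (Wc (fun p => C p.1 p.2)). Qed.

Lemma pratt_propI (P : Prop) (U : set A) : W U -> W [set b | P /\ U b].
Proof.
move=> WU; have [p|np] := pselect P.
  suff -> : [set b | P /\ U b] = U by [].
  by apply/seteqP; split=> b /=; tauto.
suff -> : [set b | P /\ U b] = set0 by exact: pratt_set0.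
by apply/seteqP; split=> b /=; tauto.
Qed.

Lemma pratt_propU (P : Prop) (U : set A) : W U -> W [set b | P \/ U b].
Proof.
move=> WU; have [p|np] := pselect P.
  suff -> : [set b | P \/ U b] = setT by exact: pratt_setT.
  by apply/seteqP; split=> b /=; tauto.
suff -> : [set b | P \/ U b] = U by [].
by apply/seteqP; split=> b /=; tauto.
Qed.

Lemma pratt_setU (U V : set A) : W U -> W V -> W (U `|` V).
Proof.
move=> WU WV; apply: (@pratt_crossword (fun a b => U a \/ V b)) => a.
split; first exact: pratt_propU.
by rewrite /= -(funext (fun b => orC (V a) (U b))); exact: pratt_propU.
Qed.

Lemma pratt_setI (U V : set A) : W U -> W V -> W (U `&` V).
Proof.
move=> WU WV; apply: (@pratt_crossword (fun a b => U a /\ V b)) => a.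
split; first exact: pratt_propI.
by rewrite /= -(funext (fun b => andC (V a) (U b))); exact: pratt_propI.
Qed.

Lemma pratt_bigcup_lt (F : nat -> set A) n :
  (forall i, W (F i)) -> W (\bigcup_(i < n) F i).
Proof.
move=> WF; rewrite bigcup_mkord.
by elim/big_ind: _ => //; [exact: pratt_set0 | exact: pratt_setU].
Qed.

Lemma pratt_bigcap_lt (F : nat -> set A) n :
  (forall i, W (F i)) -> W (\bigcap_(i < n) F i).
Proof.
move=> WF; rewrite bigcap_mkord.
by elim/big_ind: _ => //; [exact: pratt_setT | exact: pratt_setI].
Qed.

Lemma pratt_staircase (D E : nat -> set A) :
  (forall i, W (D i)) -> (forall i, W (E i)) ->
  (forall m n, (m <= n)%N -> D n `<=` D m) ->
  \bigcap_i D i = set0 \/ \bigcup_i E i = setT ->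
  W (\bigcup_i (D i `&` E i)).
Proof.
move=> WD WE Danti DE.
have -> : \bigcup_i (D i `&` E i) = [set x | exists i, D i x /\ E i x].
  by apply/seteqP; split=> x [i]; [move=> _ ? | move=> ?]; exists i.
apply: (@pratt_crossword (fun x y => exists i, D i x /\ E i y)) => x /=; split.
- have [[j Djx]|Dx] := pselect (exists j, ~ D j x).
  + suff -> : (fun y => exists i, D i x /\ E i y) =
               \bigcup_(i < j) [set y | D i x /\ E i y].
      by apply: pratt_bigcup_lt => i; exact: pratt_propI.
    apply/seteqP; split=> y /=; last by case=> i _ ?; exists i.
    move=> [i [Dix Eiy]]; exists i => //=; rewrite ltnNge; apply/negP => ji.
    exact/Djx/(Danti _ _ ji).
  + have {}Dx i : D i x by apply: contrapT => ?; apply: Dx; exists i.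
    case: DE => [D0|E1].
      suff : (\bigcap_i D i) x by rewrite D0.
      by move=> i _.
    suff -> : (fun y => exists i, D i x /\ E i y) = setT by exact: pratt_setT.
    apply/seteqP; split=> // y _; have : (\bigcup_i E i) y by rewrite E1.
    by case=> i _ Eiy; exists i.
- have [[j Ejx]|Ex] := pselect (exists j, E j x).
  + suff -> : (fun y => exists i, D i y /\ E i x) =
               \bigcup_(i < j.+1) [set y | E i x /\ D i y].
      by apply: pratt_bigcup_lt => i; exact: pratt_propI.
    apply/seteqP; split=> y /=; last by case=> i _ [? ?]; exists i.
    move=> [i [Diy Eix]]; have [ij|ji] := leqP i j; first by exists i.
    by exists j => //=; split; last exact: (Danti _ _ (ltnW ji)).
  + suff -> : (fun y => exists i, D i y /\ E i x) = set0 by exact: pratt_set0.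
    by apply/seteqP; split=> // y [i [_ Eix]]; apply: Ex; exists i.
Qed.

End PrattClosure.

Definition powerset_nat_sublattice (A : Type) (W : set (set A)) : Prop :=
  (exists g : set nat -> set A, injective g /\ forall X, W (g X)) /\
  (exists (L : set (set A)) (f : set nat -> set A),
      complete_sublattice W L /\ L = range f /\
      forall X Y : set nat, X `<=` Y <-> f X `<=` f Y).

Section Spread.
Variables (A : Type) (K : set A) (M : nat -> set A).

Definition spread (X : set nat) : set A := K `|` \bigcup_(n in X) M n.

Lemma spread_bigcup (G : set (set nat)) : G !=set0 ->
  spread (\bigcup_(X in G) X) = \bigcup_(X in G) spread X.
Proof.
move=> [X0 GX0]; apply/seteqP; split=> x.
- case=> [Kx|[n [X GX Xn] Mnx]]; first by exists X0 => //; left.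
  by exists X => //; right; exists n.
- case=> X GX [Kx|[n Xn Mnx]]; first by left.
  by right; exists n => //; exists X.
Qed.

Hypothesis trivM : trivIset setT M.

Lemma spread_bigcap (G : set (set nat)) : G !=set0 ->
  spread (\bigcap_(X in G) X) = \bigcap_(X in G) spread X.
Proof.
move=> [X0 GX0]; apply/seteqP; split=> x.
- case=> [Kx|[n Gn Mnx]] X GX; first by left.
  by right; exists n => //; apply: Gn.
- move=> Gx; have [Kx|Kx] := pselect (K x); first by left.
  have [//|[n X0n Mnx]] := Gx X0 GX0.
  right; exists n => // X GX; have [//|[m Xm Mmx]] := Gx X GX.
  by rewrite (@trivM n m I I) //; exists x.
Qed.

Lemma complete_sublattice_range_spread (W : set (set A)) :
  (forall X, W (spread X)) -> complete_sublattice W (range spread).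
Proof.
move=> Wspread; split=> [_ [X _ <-] //|F Fspread F0].
have FE : F = spread @` (spread @^-1` F).
  apply/seteqP; split=> [U FU|]; last exact: image_preimage_subset.
  by have [X _ XU] := Fspread U FU; exists X => //; rewrite /preimage /= XU.
have G0 : spread @^-1` F !=set0.
  by case: F0 => U FU; have [X _ XU] := Fspread U FU; exists X; rewrite /preimage /= XU.
by rewrite FE bigcup_image bigcap_image -spread_bigcup // -spread_bigcap.
Qed.

Variable z : nat -> A.
Hypotheses (zM : forall n, M n (z n)) (zK : forall n, ~ K (z n)).

Lemma spread_subset (X Y : set nat) : X `<=` Y <-> spread X `<=` spread Y.
Proof.
split=> [XY x|XY n Xn].
  by case=> [Kx|[n Xn Mnx]]; [left | right; exists n; first exact: XY].
have [|[m Ym Mmz]] := XY (z n) (or_intror (ex_intro2 _ _ n Xn (zM n))).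
  by move/zK.
by rewrite (@trivM n m I I) //; exists (z n).
Qed.

Lemma spread_inj : injective spread.
Proof. by move=> X Y XY; apply/seteqP; split; apply/spread_subset; rewrite XY. Qed.

Lemma spread_powerset_sublattice (W : set (set A)) :
  (forall X, W (spread X)) -> powerset_nat_sublattice W.
Proof.
move=> Wspread; split; first by exists spread; split; [exact: spread_inj |].
exists (range spread), spread; split; first exact: complete_sublattice_range_spread.
by split; last exact: spread_subset.
Qed.

End Spread.

Section Staircase.
Variables (A : Type) (a v : nat -> set A).

Definition stair_index (X : set nat) i := if `[< X i >] then i else i.+1.

Lemma stair_index_ge X i : (i <= stair_index X i)%N.
Proof. by rewrite /stair_index; case: ifP. Qed.

Lemma stair_index_le X i : (stair_index X i <= i.+1)%N.
Proof. by rewrite /stair_index; case: ifP. Qed.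

Lemma stair_index_mono X : {homo stair_index X : i j / (i <= j)%N}.
Proof.
move=> i j; rewrite leq_eqVlt => /orP[/eqP-> //|ij].
exact: leq_trans (stair_index_le X i) (leq_trans ij (stair_index_ge X j)).
Qed.

Definition stair_base : set A := \bigcup_n (seqDU v n `&` \bigcap_(j < n.+1) a j).

Definition stair_step n : set A := seqDU v n `&` \bigcap_(j < n) a j.

Lemma trivIset_stair_step : trivIset setT stair_step.
Proof. exact/trivIset_setIr/trivIset_seqDU. Qed.

Lemma spread_stairE X :
  spread stair_base stair_step X =
  \bigcup_i (\bigcap_(j < stair_index X i) a j `&` \bigcup_(j < i.+1) v j).
Proof.
transitivity (\bigcup_n (seqDU v n `&` \bigcap_(j < stair_index X n) a j)).
  apply/seteqP; split=> x.
  - case=> [[n _ [vn an]]|[n Xn [vn an]]]; exists n => //; split => //.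
      exact: subset_bigcap_lt (stair_index_le X n) _ an.
    by rewrite /stair_index asboolT.
  - case=> n _ [vn]; rewrite /stair_index.
    have [Xn|nXn] := pselect (X n); first by rewrite asboolT // => an; right; exists n.
    by rewrite asboolF // => an; left; exists n.
apply/seteqP; split=> x.
  case=> n _ [vn an]; exists n => //; split => //.
  by exists n => /=; [exact: ltnSn | move: vn; apply: subset_seqDU].
case=> n _ [an vn]; have [m /= mn vm] : (\bigcup_(j < n.+1) seqDU v j) x.
  by rewrite bigcup_mkord -bigsetU_seqDU -bigcup_mkord.
exists m => //; split => //.
by rewrite ltnS in mn; exact: subset_bigcap_lt (stair_index_mono X mn) _ an.
Qed.

Lemma stair_step_notin_base n x : stair_step n x -> ~ a n x -> ~ stair_base x.
Proof.
move=> [vn _] nax [m _ [vm am]].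
have mn : m = n by apply: (trivIset_seqDU v) => //; exists x.
by apply: nax; apply: am; rewrite mn /=.
Qed.

Lemma pratt_spread_stair (W : set (set A)) : pratt_comonoid W ->
  (forall i, W (a i)) -> (forall i, W (v i)) ->
  \bigcap_i a i = set0 \/ \bigcup_i v i = setT ->
  forall X, W (spread stair_base stair_step X).
Proof.
move=> hW Wa Wv av X; rewrite spread_stairE; apply: pratt_staircase => //.
- by move=> i; apply: pratt_bigcap_lt.
- by move=> i; apply: pratt_bigcup_lt.
- by move=> m n mn; apply: subset_bigcap_lt; exact: stair_index_mono.
- case: av => [a0|v1]; [left | right]; apply/seteqP; split=> // x.
  + rewrite -a0 => Dx i _; apply: (Dx i.+1 I).
    exact: leq_trans (ltnSn i) (stair_index_ge X i.+1).
  + move=> _; have [i _ vix] : (\bigcup_i v i) x by rewrite v1.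
    by exists i => //; exists i => /=.
Qed.

End Staircase.

Section Generated.
Variables (A : Type) (W S : set (set A)).
Hypotheses (T1 : pratt_T1 W) (genW : pratt_generated_by W S).

Lemma generated_T1_separation p q : p <> q -> exists2 s, S s & s p /\ ~ s q.
Proof.
move=> pq; apply: contrapT => nsep.
have hW' : pratt_comonoid [set U : set A | U p -> U q].
  split=> //; split=> // C CW /= Cpp.
  exact: (CW q).2 ((CW p).1 Cpp).
have SW' : S `<=` [set U : set A | U p -> U q].
  by move=> s Ss sp; apply: contrapT => nsq; apply: nsep; exists s.
have [U [WU [Up nUq]]] := T1 pq.
by apply: nUq; exact: (genW.2.2 _ hW' SW' _ WU Up).
Qed.

Lemma marked_point_unique (B B' : set (set A)) q q' :
  (forall s, S s -> (s q <-> B s)) -> (forall s, S s -> (s q' <-> B' s)) ->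
  B' `<=` B -> q = q'.
Proof.
move=> Bq Bq' BB'; apply: contrapT => qq'.
have [s Ss [sq' nsq]] := generated_T1_separation (nesym qq').
exact/nsq/(Bq s Ss)/BB'/(Bq' s Ss).
Qed.

End Generated.

Definition no_lopsided_relation (A : Type) (S : set (set A)) (k : nat)
    (P : 'I_k -> set (set A)) : Prop :=
  forall (n m : nat) (t : 'I_n -> set A) (s : 'I_m -> set A),
    (forall j, S (t j)) -> (forall i, S (s i)) ->
    (forall j i, t j <> s i) ->
    \bigcap_(i in [set: 'I_m]) s i `<=` \bigcup_(j in [set: 'I_n]) t j ->
    ~ (exists (l : 'I_k) (i0 : nat),
          forall i : 'I_m, nat_of_ord i <> i0 -> P l (s i)).

Lemma lopsided_witness (A : Type) (S : set (set A)) k (P : 'I_k -> set (set A))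
    (l : 'I_k) (a v : nat -> set A) :
  no_lopsided_relation S P -> P l `<=` S -> (forall i, P l (a i)) ->
  (forall i, S (v i)) -> injective a -> injective v -> (forall i j, a i <> v j) ->
  forall i, exists2 x, stair_step a v i x & ~ a i x.
Proof.
move=> rel PlS Pla Sv ainj vinj av i.
(* [s] lists a_0, ..., a_(i-1), v_i and [t] lists a_i, v_0, ..., v_(i-1). *)
pose t (j : 'I_i.+1) := if j == 0 :> nat then a i else v j.-1.
pose s (j : 'I_i.+1) := if (j < i)%N then a j else v i.
suff : ~ (\bigcap_(j in [set: 'I_i.+1]) s j `<=` \bigcup_(j in [set: 'I_i.+1]) t j).
  move=> /existsNP[x /not_implyP[sx tx]]; exists x; last first.
    by move=> aix; apply: tx; exists ord0.
  split; first split.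
  - by have := sx ord_max I; rewrite /s ltnn.
  - rewrite -bigcup_mkord => -[j /= ji vjx]; apply: tx.
    by exists (Ordinal (ji : j.+1 < i.+1)%N) => //; rewrite /t /=.
  - by move=> j /= ji; have := sx (Ordinal (ltnW ji : j < i.+1)%N) I; rewrite /s /= ji.
move=> incl; apply: (rel _ _ t s _ _ _ incl).
- by move=> j; rewrite /t; case: ifP => _; [exact: PlS |].
- by move=> j; rewrite /s; case: ifP => _; [exact: PlS |].
- move=> j j'; rewrite /t /s; case: (j =P 0 :> nat) => [_|j0]; case: ifP => j'i.
  + by move/ainj => ij'; rewrite -ij' ltnn in j'i.
  + exact: av.
  + by move=> /esym; apply: av.
  + move/vinj => ji; have := ltn_ord j; move: j0 ji.
    by case: (nat_of_ord j) => // j1 _ /= ->; rewrite ltnn.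
- exists l, i => j ji; rewrite /s ifT; first exact: Pla.
  by rewrite ltn_neqAle -ltnS ltn_ord andbT; apply/eqP.
Qed.

Lemma sublattice_or_marked_point (A : Type) (W S : set (set A)) k
    (P : 'I_k -> set (set A)) (l : 'I_k) (a : nat -> set A) :
  pratt_T1 W -> pratt_generated_by W S -> countable S ->
  no_lopsided_relation S P -> P l `<=` S -> (forall i, P l (a i)) ->
  injective a -> infinite_set (S `\` range a) ->
  powerset_nat_sublattice W \/ exists q, forall s, S s -> (s q <-> range a s).
Proof.
move=> T1 genW cS rel PlS Pla ainj iSa.
have cSa : countable (S `\` range a).
  by apply: sub_countable cS; apply: subset_card_le => s [].
have [v [vSa vinj vSa_surj]] := countable_infinite_bij cSa iSa.
have Sv i : S (v i) by have [] := vSa i I.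
have av i j : a i <> v j by move=> aiv; have [_] := vSa j I; apply; exists i.
have Sav s : S s -> range a s \/ range v s.
  move=> Ss; have [|nas] := pselect (range a s); first by left.
  by right; have [j _ <-] := vSa_surj s (conj Ss nas); exists j.
have /choice[z zP] : forall n, exists x, stair_step a v n x /\ ~ a n x.
  move=> n; have [x ? ?] := lopsided_witness rel PlS Pla Sv ainj (in2TT vinj) av n.
  by exists x.
have [hW [SW _]] := genW.
have Wa i : W (a i) by apply/SW/PlS.
have Wv i : W (v i) by apply/SW.
have [av0|] := pselect (\bigcap_i a i = set0 \/ \bigcup_i v i = setT).
  left; apply: (spread_powerset_sublattice (@trivIset_stair_step _ a v) (z := z)).
  - by move=> n; have [] := zP n.
  - by move=> n; have [zs naz] := zP n; exact: stair_step_notin_base zs naz.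
  - exact: pratt_spread_stair.
move=> /not_orP[/eqP/set0P[q aq]] /eqP/setTPn[r vr]; right; exists q.
have qr : q = r.
  apply: contrapT => qr.
  have [s Ss [sr nsq]] := generated_T1_separation T1 genW (nesym qr).
  case: (Sav s Ss) => -[i _ si]; first by apply: nsq; rewrite -si; exact: aq.
  by apply: vr; exists i; rewrite // si.
move=> s Ss; split=> [sq|[i _ <-]]; last exact: aq.
case: (Sav s Ss) => // -[j _ js]; case: vr; exists j => //.
by rewrite js -qr.
Qed.

Theorem corollary7p11 (A : Type) (W S : set (set A)) (k : nat)
  (P : 'I_k -> set (set A)) :
  pratt_T1 W ->
  pratt_generated_by W S ->
  countable S -> infinite_set S ->
  is_partition_of S P ->
  (forall (n m : nat) (t : 'I_n -> set A) (s : 'I_m -> set A),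
      (forall j, S (t j)) -> (forall i, S (s i)) ->
      (forall j i, t j <> s i) ->
      \bigcap_(i in [set: 'I_m]) s i `<=` \bigcup_(j in [set: 'I_n]) t j ->
      ~ (exists (l : 'I_k) (i0 : nat),
            forall i : 'I_m, nat_of_ord i <> i0 -> P l (s i))) ->
  (exists g : set nat -> set A, injective g /\ forall X, W (g X)) /\
  (exists (L : set (set A)) (f : set nat -> set A),
      complete_sublattice W L /\
      L = range f /\
      forall X Y : set nat, X `<=` Y <-> f X `<=` f Y).
Proof.
move=> T1 genW cS iS [PS [SP _]] rel.
have [l iPl] := infinite_partition_class iS SP.
have cPl : countable (P l) by apply: sub_countable cS; exact: subset_card_le (PS l).
have [e [Pe einj _]] := countable_infinite_bij cPl iPl.
(* The odd-indexed generators stay outside [range (a d)] for even [d]. *)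
pose a d i := e (i.*2 + d).
have Pla d i : P l (a d i) by exact: Pe.
have ainj d : injective (a d) by move=> i j /(in2TT einj); lia.
have iSa d : ~~ odd d -> infinite_set (S `\` range (a d)).
  move=> evd; apply: sub_infinite_set (infinite_range (f := fun n => e n.*2.+1) _).
    move=> _ [n _ <-]; split; first exact/PS/Pe.
    by move=> [i _ /(in2TT einj)]; move: evd; lia.
  by move=> n m /(in2TT einj); lia.
have [//|[q0 q0a]] :=
  sublattice_or_marked_point T1 genW cS rel (PS l) (Pla 0) (ainj 0) (iSa 0 isT).
have [//|[q2 q2a]] :=
  sublattice_or_marked_point T1 genW cS rel (PS l) (Pla 2) (ainj 2) (iSa 2 isT).
have q02 : q0 = q2.
  apply: (marked_point_unique T1 genW q0a q2a) => _ [i _ <-].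
  by exists i.+1 => //; rewrite /a doubleS addn2 addn0.
have Se0 : S (e 0) by exact/PS/Pe.
have : e 0 q0 by apply/(q0a _ Se0); exists 0.
by rewrite q02 => /(q2a _ Se0)[i _ /(in2TT einj)]; lia.
Qed.
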